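(* Let $n \geq 2$ and let $\lambda = (\lambda_1, \ldots, \lambda_n)$ be a partition with $n$ parts. Then \[ A_\lambda(n) = \sum_{j=1}^n \binom{\lambda_1 - \lambda_2 + j - 1}{\lambda_1 - \lambda_2} R(\lambda, j). \]
   Context: Six-vertex model: on a grid with $r$ rows and $c$ columns there are $r$ horizontal lines and $c$ vertical lines meeting in $rc$ vertices. Each horizontal line consists of $c+1$ edges (the outermost ones are a left and a right boundary edge) and each vertical line of $r+1$ edges (the outermost ones are a top and a bottom boundary edge). A state assigns an orientation to every edge, agreeing with prescribed orientations on the boundary edges, such that at every vertex exactly two of the four adjacent edges point into the vertex and two point out. A partition $\lambda=(\lambda_1,\dots,\lambda_n)$ means integers $\lambda_1 \geq \cdots \geq \lambda_n \geq 0$. $A_\lambda(n)$ is the number of states on the grid with $n$ rows and $n + \lambda_1$ columns with boundary conditions: left boundary arrows point right, right boundary arrows point left, bottom boundary arrows point down, and, numbering columns $1, \ldots, n+\lambda_1$ from right to left, the top boundary arrow in column $i$ points up if $i \in \{\lambda_k + n + 1 - k : 1 \leq k \leq n\}$ and down otherwise. Number rows $1,\dots,n$ from top to bottom. $R(\lambda, j)$ is the number of states on the grid formed by the rightmost $n + \lambda_2 - 1$ columns (columns $1, \ldots, n+\lambda_2-1$) with boundary conditions: the top, bottom and right boundary arrows are as in the model for $A_\lambda(n)$ (top arrow of column $i$ up iff $i \in \{\lambda_k + n+1-k\}$, bottom down, right boundary pointing left), and on the left boundary of this subgrid the arrow in row $j$ points left while all other arrows point right. *)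

From mathcomp Require Import all_boot.
Set Implicit Arguments. Unset Strict Implicit. Unset Printing Implicit Defensive.

(* Internal 0-based conventions:
   - row i : 'I_r is the paper's row i+1 (rows numbered top to bottom);
   - column k : 'I_c is the paper's column k+1 (columns numbered RIGHT to LEFT);
   - horizontal edges of row i are indexed by e in 0..c : e = 0 is the right
     boundary edge, e = c the left boundary edge; vertex (i,k) has right edge
     e = k and left edge e = k+1.  Value true = arrow points right.
   - vertical edges of column k are indexed by t in 0..r : t = 0 is the top
     boundary edge, t = r the bottom boundary edge; vertex (i,k) has top edge
     t = i and bottom edge t = i+1.  Value true = arrow points up. *)

Definition state (r c : nat) : finType :=
  ({ffun 'I_r -> {ffun 'I_c.+1 -> bool}} * {ffun 'I_c -> {ffun 'I_r.+1 -> bool}})%type.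

Definition hor r c (s : state r c) (i : 'I_r) (e : nat) : bool := s.1 i (inord e).
Definition ver r c (s : state r c) (k : 'I_c) (t : nat) : bool := s.2 k (inord t).

(* number of the four edges adjacent to vertex (i,k) pointing into it *)
Definition in_count r c (s : state r c) (i : 'I_r) (k : 'I_c) : nat :=
  (hor s i k.+1 : nat)
  + (~~ hor s i k : nat)
  + (~~ ver s k i : nat)
  + (ver s k i.+1 : nat).

(* lb i : left boundary arrow of row i points right;
   rb i : right boundary arrow of row i points right;
   tb k : top boundary arrow of column k points up;
   bb k : bottom boundary arrow of column k points up. *)
Definition valid_state r c (lb rb : 'I_r -> bool) (tb bb : 'I_c -> bool)
    (s : state r c) : bool :=
  [forall i : 'I_r, (hor s i c == lb i) && (hor s i 0 == rb i)] &&
  [forall k : 'I_c, (ver s k 0 == tb k) && (ver s k r == bb k)] &&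
  [forall i : 'I_r, forall k : 'I_c, in_count s i k == 2].

Definition nstates r c (lb rb : 'I_r -> bool) (tb bb : 'I_c -> bool) : nat :=
  #|[set s : state r c | valid_state lb rb tb bb s]|.

(* partitions: lam = [:: lambda_1; ...; lambda_n], nonincreasing *)
Definition lam_ (lam : seq nat) (k : nat) : nat := nth 0 lam k.-1. (* lambda_k, 1-based *)

(* paper column i (1-based, right to left) has top arrow up iff
   i \in {lambda_k + n + 1 - k : 1 <= k <= n} *)
Definition top_up (lam : seq nat) (i : nat) : bool :=
  let n := size lam in i \in [seq lam_ lam k + n + 1 - k | k <- iota 1 n].

Definition A_lam (lam : seq nat) : nat :=
  let n := size lam in
  @nstates n (n + lam_ lam 1)
    (fun _ => true) (fun _ => false)
    (fun k => top_up lam k.+1) (fun _ => false).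

Definition R_lam (lam : seq nat) (j : nat) : nat :=
  let n := size lam in
  @nstates n (n + lam_ lam 2 - 1)
    (fun i => i.+1 != j) (fun _ => false)
    (fun k => top_up lam k.+1) (fun _ => false).

(* Cut the grid between columns n + lambda_2 - 1 and n + lambda_2.  The number
   of states is the sum, over the arrows v crossing the cut, of the products of
   the numbers of states of the two blocks.  When v points left in row j only,
   the right block is the grid of R(lambda, j).  In the left block, of width
   m + 1 with m = lambda_1 - lambda_2, the top arrow points up only in the
   leftmost column; building this block one column at a time, a column whose
   left boundary points left in row j' only has a (unique) state exactly when
   its right boundary points left in a single row j >= j'.  Hence the left block
   has no state unless v points left in a single row j, and then, by induction
   on the width and the hockey-stick identity, it has C(m + j - 1, m) states. *)

From mathcomp Require Import all_boot zify.
Set Implicit Arguments. Unset Strict Implicit. Unset Printing Implicit Defensive.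

Lemma valid_stateP r c lb rb tb bb (s : state r c) :
  reflect [/\ forall i, hor s i c = lb i, forall i, hor s i 0 = rb i,
              forall k, ver s k 0 = tb k, forall k, ver s k r = bb k
            & forall i k, in_count s i k = 2]
          (valid_state lb rb tb bb s).
Proof.
apply: (iffP idP) => [/andP[/andP[/forallP hh /forallP hv] /forallP hc]|[h1 h2 h3 h4 h5]].
  split=> [i|i|k|k|i k].
  - by case/andP: (hh i) => /eqP.
  - by case/andP: (hh i) => _ /eqP.
  - by case/andP: (hv k) => /eqP.
  - by case/andP: (hv k) => _ /eqP.
  - exact/eqP/(forallP (hc i)).
apply/andP; split; [apply/andP; split|]; apply/forallP => i.
- by rewrite h1 h2 !eqxx.
- by rewrite h3 h4 !eqxx.
- by apply/forallP => k; rewrite h5.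
Qed.

(* Top and bottom boundaries are given on column numbers, so that they restrict
   to a block of columns by a shift. *)
Definition count_states r c (lb rb : 'I_r -> bool) (tb bb : nat -> bool) :=
  @nstates r c lb rb (fun k : 'I_c => tb k) (fun k : 'I_c => bb k).

Lemma eq_count_states r c (lb rb lb' rb' : 'I_r -> bool) (tb bb tb' bb' : nat -> bool) :
  lb =1 lb' -> rb =1 rb' -> {in gtn c, tb =1 tb'} -> {in gtn c, bb =1 bb'} ->
  count_states c lb rb tb bb = count_states c lb' rb' tb' bb'.
Proof.
move=> elb erb etb ebb; apply: eq_card => s; rewrite !inE /valid_state.
have in_c (k : 'I_c) : (k : nat) \in gtn c := ltn_ord k.
by congr (_ && _ && _); apply: eq_forallb => i; rewrite ?(elb, erb) ?etb ?ebb ?in_c.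
Qed.

Section Blocks.
Variables (r c1 c2 : nat).
Implicit Types (s : state r (c2 + c1)) (a : state r c1) (b : state r c2).

Definition left_block s : state r c1 :=
  ([ffun i => [ffun e : 'I_c1.+1 => hor s i (c2 + e)]],
   [ffun k => s.2 (rshift c2 k)]).

Definition right_block s : state r c2 :=
  ([ffun i => [ffun e : 'I_c2.+1 => hor s i e]], [ffun k => s.2 (lshift c1 k)]).

Definition seam s : {ffun 'I_r -> bool} := [ffun i => hor s i c2].

Definition glue a b : state r (c2 + c1) :=
  ([ffun i => [ffun e : 'I_(c2 + c1).+1 =>
      if e < c2 then hor b i e else hor a i (e - c2)]],
   [ffun k => match split k with inl k' => b.2 k' | inr k' => a.2 k' end]).

Lemma hor_left_block s i e : e <= c1 -> hor (left_block s) i e = hor s i (c2 + e).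
Proof. by move=> le_e; rewrite /hor !ffunE inordK. Qed.

Lemma hor_right_block s i e : e <= c2 -> hor (right_block s) i e = hor s i e.
Proof. by move=> le_e; rewrite /hor !ffunE inordK. Qed.

Lemma ver_left_block s k t : ver (left_block s) k t = ver s (rshift c2 k) t.
Proof. by rewrite /ver ffunE. Qed.

Lemma ver_right_block s k t : ver (right_block s) k t = ver s (lshift c1 k) t.
Proof. by rewrite /ver ffunE. Qed.

Lemma in_count_left_block s i k :
  in_count (left_block s) i k = in_count s i (rshift c2 k).
Proof.
have lt_k := ltn_ord k.
by rewrite /in_count !hor_left_block ?ver_left_block ?addnS // ltnW.
Qed.

Lemma in_count_right_block s i k :
  in_count (right_block s) i k = in_count s i (lshift c1 k).
Proof.
have lt_k := ltn_ord k.
by rewrite /in_count !hor_right_block ?ver_right_block // ltnW.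
Qed.

Lemma hor_glue a b i e : e <= c2 + c1 ->
  hor (glue a b) i e = if e < c2 then hor b i e else hor a i (e - c2).
Proof. by move=> le_e; rewrite /hor !ffunE inordK. Qed.

Lemma ver_glue_lshift a b k t : ver (glue a b) (lshift c1 k) t = ver b k t.
Proof. by rewrite /ver ffunE -[lshift _ _]/(unsplit (inl k)) unsplitK. Qed.

Lemma ver_glue_rshift a b k t : ver (glue a b) (rshift c2 k) t = ver a k t.
Proof. by rewrite /ver ffunE -[rshift _ _]/(unsplit (inr k)) unsplitK. Qed.

Lemma hor_glue_left a b i e : c2 <= e <= c2 + c1 ->
  hor (glue a b) i e = hor a i (e - c2).
Proof. by case/andP=> le_c2 le_e; rewrite hor_glue // ltnNge le_c2. Qed.

Lemma hor_glue_right a b i e : hor a i 0 = hor b i c2 -> e <= c2 ->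
  hor (glue a b) i e = hor b i e.
Proof.
move=> eq_seam le_e; rewrite hor_glue ?(leq_trans le_e) ?leq_addr //=.
by case: ltngtP le_e => // -> _; rewrite subnn.
Qed.

Lemma in_count_glue_lshift a b i k : hor a i 0 = hor b i c2 ->
  in_count (glue a b) i (lshift c1 k) = in_count b i k.
Proof.
move=> eq_seam; have lt_k := ltn_ord k.
by rewrite /in_count !hor_glue_right ?ver_glue_lshift // ltnW.
Qed.

Lemma in_count_glue_rshift a b i k :
  in_count (glue a b) i (rshift c2 k) = in_count a i k.
Proof.
have lt_k := ltn_ord k.
rewrite /in_count /= !hor_glue_left ?ver_glue_rshift; try lia.
by rewrite -addnS !addKn.
Qed.

Lemma blocksK s : glue (left_block s) (right_block s) = s.
Proof.
case: s => h v; congr pair.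
  apply/ffunP => i; apply/ffunP => e; rewrite 2!ffunE.
  have lt_e := ltn_ord e; case: ifP => lt_e_c2.
    by rewrite hor_right_block ?(ltnW lt_e_c2) // /hor inord_val.
  have le_c2 : c2 <= e by rewrite leqNgt lt_e_c2.
  rewrite hor_left_block ?subnKC // ?leq_subLR; last by rewrite -ltnS.
  by rewrite /hor inord_val.
apply/ffunP => k; rewrite ffunE; case: splitP => k' eq_k; rewrite ffunE.
  by congr (v _); apply: val_inj.
by congr (v _); apply: val_inj.
Qed.

Lemma glueK a b : (forall i, hor a i 0 = hor b i c2) ->
  left_block (glue a b) = a /\ right_block (glue a b) = b.
Proof.
case: a b => [ah av] [bh bv] eq_seam; split; congr pair.
- apply/ffunP => i; apply/ffunP => e; rewrite !ffunE hor_glue_left; last first.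
    by rewrite leq_addr leq_add2l -ltnS ltn_ord.
  by rewrite addKn /hor inord_val.
- by apply/ffunP => k; rewrite !ffunE -[rshift _ _]/(unsplit (inr k)) unsplitK.
- apply/ffunP => i; apply/ffunP => e; rewrite !ffunE hor_glue_right //; last first.
    by rewrite -ltnS ltn_ord.
  by rewrite /hor inord_val.
- by apply/ffunP => k; rewrite !ffunE -[lshift _ _]/(unsplit (inl k)) unsplitK.
Qed.

Variables (lb rb : 'I_r -> bool) (tb bb : nat -> bool).

Lemma valid_blocks s :
  valid_state lb rb (fun k : 'I_(c2 + c1) => tb k) (fun k => bb k) s ->
  valid_state lb (seam s) (fun k : 'I_c1 => tb (c2 + k)) (fun k => bb (c2 + k))
    (left_block s) /\
  valid_state (seam s) rb (fun k : 'I_c2 => tb k) (fun k => bb k) (right_block s).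
Proof.
case/valid_stateP=> hl hr ht hb hc; split; apply/valid_stateP; split=> [i|i|k|k|i k].
- by rewrite hor_left_block // addn0.
- by rewrite hor_left_block // addn0 ffunE.
- by rewrite ver_left_block ht.
- by rewrite ver_left_block hb.
- by rewrite in_count_left_block.
- by rewrite hor_right_block // ffunE.
- by rewrite hor_right_block.
- by rewrite ver_right_block ht.
- by rewrite ver_right_block hb.
- by rewrite in_count_right_block.
Qed.

Lemma valid_glue (v : {ffun 'I_r -> bool}) a b :
  valid_state lb v (fun k : 'I_c1 => tb (c2 + k)) (fun k => bb (c2 + k)) a ->
  valid_state v rb (fun k : 'I_c2 => tb k) (fun k => bb k) b ->
  [/\ forall i, hor a i 0 = hor b i c2,
      valid_state lb rb (fun k : 'I_(c2 + c1) => tb k) (fun k => bb k) (glue a b)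
    & seam (glue a b) = v].
Proof.
case/valid_stateP=> hla hra hta hba hca /valid_stateP[hlb hrb htb hbb hcb].
have eq_seam i : hor a i 0 = hor b i c2 by rewrite hra hlb.
split=> //; last by apply/ffunP => i; rewrite ffunE hor_glue_right.
apply/valid_stateP; split=> [i|i|k|k|i k].
- by rewrite hor_glue_left ?leq_addr //= addKn hla.
- by rewrite hor_glue_right.
- by rewrite -(splitK k); case: split => k'; rewrite ?ver_glue_lshift ?ver_glue_rshift.
- by rewrite -(splitK k); case: split => k'; rewrite ?ver_glue_lshift ?ver_glue_rshift.
- rewrite -(splitK k); case: split => k' /=.
    by rewrite in_count_glue_lshift.
  by rewrite in_count_glue_rshift.
Qed.

Lemma count_states_split :
  count_states (c2 + c1) lb rb tb bb =
  \sum_(v : {ffun 'I_r -> bool})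
    count_states c1 lb v (fun k => tb (c2 + k)) (fun k => bb (c2 + k)) *
    count_states c2 v rb tb bb.
Proof.
rewrite /count_states /nstates -sum1_card (partition_big seam predT) //=.
apply: eq_bigr => v _; rewrite sum1dep_card -cardsX.
have blocks_inj : injective (fun s => (left_block s, right_block s)).
  by apply: (can_inj (g := fun p => glue p.1 p.2)) => s; apply: blocksK.
rewrite -(card_imset _ blocks_inj); apply: eq_card => -[a b]; rewrite !inE.
apply/imsetP/andP => [[s]|[va vb]].
  by rewrite !inE => /andP[valid_s /eqP <-] [-> ->]; case: (valid_blocks valid_s) => -> ->.
have [eq_seam valid_ab seam_ab] := valid_glue va vb.
exists (glue a b); first by rewrite !inE valid_ab seam_ab eqxx.
by have [-> ->] := glueK eq_seam.
Qed.

End Blocks.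

Definition nleft r (f : 'I_r -> bool) (i : nat) : nat := \sum_(t < r) ((t < i) && ~~ f t).

Lemma nleft0 r (f : 'I_r -> bool) : nleft f 0 = 0.
Proof. by rewrite /nleft big1. Qed.

Lemma nleftS r (f : 'I_r -> bool) i (lt_i : i < r) :
  nleft f i.+1 = nleft f i + ~~ f (Ordinal lt_i).
Proof.
rewrite /nleft (bigD1 (Ordinal lt_i)) //= ltnSn addnC; congr (_ + _).
rewrite [RHS](bigD1 (Ordinal lt_i)) //= ltnn add0n; apply: eq_bigr => t ne_t.
have /negbTE ne_ti : val t != i by apply: contra ne_t => /eqP eq_t; apply/eqP/val_inj.
by rewrite ltnS leq_eqVlt ne_ti.
Qed.

Section Column.
Variables (r : nat) (lb rb : 'I_r -> bool) (t b : bool).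

Definition column_ok :=
  [forall i : 'I_r.+1, nleft lb i <= ~~ t + nleft rb i <= (nleft lb i).+1] &&
  (~~ t + nleft rb r == ~~ b + nleft lb r).

Definition column_state : state r 1 :=
  ([ffun i => [ffun e : 'I_2 => if val e == 0 then rb i else lb i]],
   [ffun _ => [ffun i : 'I_r.+1 => ~~ t + nleft rb i == nleft lb i]]).

(* The ice rule summed over the top i vertices of the column: as many arrows
   enter through the top and the right side as leave through the left side and
   through edge i. *)
Lemma column_balance s : valid_state lb rb (fun _ : 'I_1 => t) (fun _ => b) s ->
  forall i, i <= r -> ~~ ver s ord0 i + nleft lb i = ~~ t + nleft rb i.
Proof.
case/valid_stateP=> hl hr ht _ hc; elim=> [|i IH] lt_i; first by rewrite !nleft0 ht.
have := hc (Ordinal lt_i) ord0; rewrite /in_count /= hl hr !nleftS.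
have := IH (ltnW lt_i).
by case: (ver s ord0 i); case: (ver s ord0 i.+1); case: (lb _); case: (rb _) => /=; lia.
Qed.

Lemma valid_column s : valid_state lb rb (fun _ : 'I_1 => t) (fun _ => b) s ->
  column_ok /\ s = column_state.
Proof.
move=> valid_s; have balance := column_balance valid_s.
case/valid_stateP: valid_s => hl hr _ hb _; split.
  apply/andP; split.
    by apply/forallP => i; have := balance i (ltn_ord i); case: (ver s ord0 i) => /=; lia.
  by rewrite -balance // hb addnC.
case: s hl hr hb balance => [h v] hl hr _ balance; congr pair.
  apply/ffunP => i; apply/ffunP => -[[|[|e]] lt_e] //; rewrite !ffunE /=.
    by rewrite -hr /hor; congr (h i _); apply: val_inj; rewrite /= inordK.
  by rewrite -hl /hor; congr (h i _); apply: val_inj; rewrite /= inordK.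
apply/ffunP => k; rewrite ffunE (ord1 k); apply/ffunP => i; rewrite ffunE.
have := balance i (ltn_ord i); rewrite /ver /= inord_val.
by case: (v ord0 i) => /=; lia.
Qed.

Lemma column_state_valid :
  column_ok -> valid_state lb rb (fun _ : 'I_1 => t) (fun _ => b) column_state.
Proof.
case/andP=> /forallP ok /eqP balance_r.
have bounds i : i <= r -> nleft lb i <= ~~ t + nleft rb i <= (nleft lb i).+1.
  by move=> le_i; exact: (ok (Ordinal (le_i : i < r.+1))).
have ver_state k i : i <= r -> ver column_state k i = (~~ t + nleft rb i == nleft lb i).
  by move=> le_i; rewrite /ver !ffunE inordK.
apply/valid_stateP; split=> [i|i|k|k|i k].
- by rewrite /hor !ffunE /= inordK.
- by rewrite /hor !ffunE /= inordK.
- by rewrite ver_state // !nleft0; case: t.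
- by rewrite ver_state // balance_r; case: b => /=; lia.
- have lt_i := ltn_ord i.
  rewrite /in_count (ord1 k) !ver_state ?(ltnW lt_i) // /hor !ffunE /= !inordK //.
  have := bounds i (ltnW lt_i); have := bounds i.+1 lt_i.
  rewrite !(nleftS _ lt_i) (_ : Ordinal lt_i = i); last exact: val_inj.
  by case: (lb i); case: (rb i); case: t => /=; lia.
Qed.

Lemma count_column : count_states 1 lb rb (fun _ => t) (fun _ => b) = column_ok.
Proof.
rewrite /count_states /nstates; have [ok|not_ok] := boolP column_ok.
  rewrite (_ : [set s | _] = [set column_state]) ?cards1 //; apply/setP => s.
  rewrite !inE; apply/idP/eqP => [/valid_column[]//|->]; exact: column_state_valid.
rewrite (_ : [set s | _] = set0) ?cards0 //; apply/setP => s; rewrite !inE.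
by apply/negP => /valid_column[ok _]; rewrite ok in not_ok.
Qed.

End Column.

Definition left_at r j : {ffun 'I_r -> bool} := [ffun i : 'I_r => i.+1 != j].

Lemma nleft_true r i : nleft (fun _ : 'I_r => true) i = 0.
Proof. by rewrite /nleft big1 // => t _; rewrite andbF. Qed.

Lemma nleft_left_at r j i : 1 <= j <= r -> nleft (left_at r j) i = (j <= i).
Proof.
case/andP=> j_gt0 le_j; have lt_j : j.-1 < r by rewrite prednK.
rewrite /nleft (bigD1 (Ordinal lt_j)) //= big1 ?addn0.
  by rewrite ffunE /= prednK // eqxx andbT.
move=> t ne_t; rewrite ffunE negbK.
have ne_tj : val t != j.-1 by apply: contra ne_t => /eqP eq_t; apply/eqP/val_inj.
by rewrite -(eqn_add2r 1) !addn1 prednK // in ne_tj; rewrite (negbTE ne_tj) andbF.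
Qed.

Lemma nleft_eq1 r (v : {ffun 'I_r -> bool}) :
  nleft v r = 1 -> exists2 j, 1 <= j <= r & v = left_at r j.
Proof.
move=> one_left.
have : \sum_(t < r | predT t) (~~ v t : nat) == 1.
  by rewrite -one_left; apply/eqP/eq_bigr => t _; rewrite ltn_ord.
case/sum_nat_eq1=> i [_ vi others]; exists i.+1; first exact: ltn_ord.
apply/ffunP => t; rewrite ffunE eqSS.
have [->|ne_ti] := eqVneq t i; first by rewrite eqxx; case: (v i) vi.
by have := others t ne_ti isT; case: (v t).
Qed.

Lemma left_at_inj r j j' : 1 <= j <= r -> 1 <= j' <= r ->
  left_at r j = left_at r j' -> j = j'.
Proof.
move=> hj hj' eq_left.
have nleft_eq k : nleft (left_at r j) k = nleft (left_at r j') k by rewrite eq_left.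
have := nleft_eq j; have := nleft_eq j'; rewrite !nleft_left_at // !leqnn.
by case: leqP; case: leqP => //=; lia.
Qed.

Lemma sum_left_at_eq r j (F : nat -> nat) : 1 <= j <= r ->
  \sum_(1 <= j' < r.+1 | left_at r j == left_at r j') F j' = F j.
Proof.
move=> hj; rewrite big_nat_cond.
rewrite (eq_bigl (fun j' => (1 <= j' < r.+1) && (j' == j))) => [|j'].
  by rewrite big_nat1_cond_eq ltnS hj.
apply: andb_id2l => hj'; apply/eqP/eqP => [|->] //.
by move=> /(left_at_inj hj hj').
Qed.

Lemma sum_left_at_none r (v : {ffun 'I_r -> bool}) (F : nat -> nat) :
  (forall j, 1 <= j <= r -> v != left_at r j) ->
  \sum_(1 <= j < r.+1 | v == left_at r j) F j = 0.
Proof.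
move=> none; rewrite big_nat_cond big1 // => j /andP[hj /eqP eq_v].
by case/eqP: (none j hj).
Qed.

Lemma eq_sum_left_at r (v : {ffun 'I_r -> bool}) (G : nat) (F : nat -> nat) :
  (forall j, 1 <= j <= r -> v = left_at r j -> G = F j) ->
  ((forall j, 1 <= j <= r -> v != left_at r j) -> G = 0) ->
  G = \sum_(1 <= j < r.+1 | v == left_at r j) F j.
Proof.
move=> at_j none.
have [/existsP[j /eqP eq_v]|no_j] := boolP [exists j : 'I_r, v == left_at r j.+1].
  by rewrite eq_v sum_left_at_eq ?(at_j j.+1) ?ltn_ord.
have {}no_j j : 1 <= j <= r -> v != left_at r j.
  case/andP=> j_gt0 le_j; have lt_j : j.-1 < r by rewrite prednK.
  by apply: contraNneq no_j => ->; apply/existsP; exists (Ordinal lt_j); rewrite /= prednK.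
by rewrite none // sum_left_at_none.
Qed.

Lemma sum_left_at_mul r (F : nat -> nat) (G : {ffun 'I_r -> bool} -> nat) :
  \sum_(v : {ffun 'I_r -> bool}) (\sum_(1 <= j < r.+1 | v == left_at r j) F j) * G v =
  \sum_(1 <= j < r.+1) F j * G (left_at r j).
Proof.
rewrite (eq_bigr (fun v => \sum_(1 <= j < r.+1 | v == left_at r j) F j * G v));
  last by move=> v _; rewrite big_distrl.
rewrite (exchange_big_dep predT) //=; apply: eq_bigr => j _.
by rewrite (big_pred1 (left_at r j)).
Qed.

Lemma count_column_right r (v : {ffun 'I_r -> bool}) (tb : nat -> bool) : tb 0 ->
  count_states 1 (fun _ => true) v tb (fun _ => false) =
  \sum_(1 <= j < r.+1 | v == left_at r j) 1.
Proof.
move=> tb0.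
transitivity (count_states 1 (fun _ => true) v (fun _ => true) (fun _ => false)).
  by apply: eq_count_states => // k; rewrite inE ltnS leqn0 => /eqP ->.
rewrite count_column; apply: eq_sum_left_at => [j hj ->|none].
  apply/eqP; rewrite eqb1; apply/andP; split; first apply/forallP => i.
    by rewrite nleft_true nleft_left_at //= leq_b1.
  by rewrite nleft_true nleft_left_at // (andP hj).2.
apply/eqP; rewrite eqb0; apply/negP => /andP[_ /eqP].
by rewrite nleft_true /= => /nleft_eq1[j hj eq_v]; move: (none j hj); rewrite eq_v eqxx.
Qed.

Lemma count_column_left_at r (v : {ffun 'I_r -> bool}) j' (tb : nat -> bool) :
  1 <= j' <= r -> ~~ tb 0 ->
  count_states 1 (left_at r j') v tb (fun _ => false) =
  \sum_(1 <= j < r.+1 | v == left_at r j) (j' <= j).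
Proof.
move=> hj' tb0.
transitivity (count_states 1 (left_at r j') v (fun _ => false) (fun _ => false)).
  by apply: eq_count_states => // k; rewrite inE ltnS leqn0 => /eqP ->; apply/negbTE.
rewrite count_column; apply: eq_sum_left_at => [j hj ->|none].
  congr nat_of_bool; apply/andP/idP => [[/forallP ok _]|le_j'j].
    have := ok (Ordinal ((andP hj).2 : j < r.+1)).
    by rewrite /= !nleft_left_at // leqnn; case: (leqP j' j).
  split; first apply/forallP => i.
    by rewrite !nleft_left_at //; case: (leqP j i); case: (leqP j' i) => /=; lia.
  by rewrite !nleft_left_at // (andP hj).2 (andP hj').2.
apply/eqP; rewrite eqb0; apply/negP => /andP[_ /eqP].
rewrite nleft_left_at // (andP hj').2 => /addnI /nleft_eq1[j hj eq_v].
by move: (none j hj); rewrite eq_v eqxx.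
Qed.

Lemma hockey_stick m j : \sum_(1 <= i < j.+1) 'C(m + i - 1, m) = 'C(m + j, m.+1).
Proof.
elim: j => [|j IH]; first by rewrite big_nil bin_small // addn0.
by rewrite big_nat_recr //= IH addnS binS subn1.
Qed.

Lemma count_corner_block r m (v : {ffun 'I_r -> bool}) :
  count_states m.+1 (fun _ => true) v (fun k => k == m) (fun _ => false) =
  \sum_(1 <= j < r.+1 | v == left_at r j) 'C(m + j - 1, m).
Proof.
elim: m v => [|m IH] v.
  by rewrite count_column_right //; apply: eq_bigr => j _; rewrite bin0.
rewrite -[m.+2]/(1 + m.+1) count_states_split.
transitivity (\sum_(u : {ffun 'I_r -> bool})
   (\sum_(1 <= j' < r.+1 | u == left_at r j') 'C(m + j' - 1, m)) *
   count_states 1 u v (fun k => k == m.+1) (fun _ => false)).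
  by apply: eq_bigr => u _; rewrite -IH.
rewrite sum_left_at_mul.
transitivity (\sum_(1 <= j' < r.+1) 'C(m + j' - 1, m) *
   \sum_(1 <= j < r.+1 | v == left_at r j) (j' <= j)).
  by apply: eq_big_nat => j' hj'; rewrite count_column_left_at.
rewrite (eq_bigr (fun j' => \sum_(1 <= j < r.+1 | v == left_at r j)
  'C(m + j' - 1, m) * (j' <= j))); last by move=> j' _; rewrite big_distrr.
rewrite exchange_big_nat /= big_nat_cond [RHS]big_nat_cond.
apply: eq_bigr => j /andP[/andP[_ lt_j] _].
rewrite addSn subn1 /= -hockey_stick (big_nat_widen _ _ _ _ _ lt_j) [RHS]big_mkcond.
by apply: eq_bigr => j' _; rewrite mulnbr.
Qed.

Lemma lam_nonincreasing (lam : seq nat) i j : sorted geq lam ->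
  1 <= i <= j -> j <= size lam -> lam_ lam j <= lam_ lam i.
Proof.
move=> lam_sorted /andP[i_gt0 le_ij] le_j.
have geq_trans : transitive geq by move=> a b c ge_ab ge_bc; apply: leq_trans ge_bc ge_ab.
apply: (sorted_leq_nth geq_trans leqnn 0 lam_sorted); rewrite ?inE; lia.
Qed.

(* Beyond column n + lambda_2 - 1 the only top arrow pointing up is that of
   k = 1, in column n + lambda_1. *)
Lemma top_up_corner (lam : seq nat) k : sorted geq lam -> 2 <= size lam ->
  k <= lam_ lam 1 - lam_ lam 2 ->
  top_up lam (size lam + lam_ lam 2 - 1 + k).+1 = (k == lam_ lam 1 - lam_ lam 2).
Proof.
move=> lam_sorted size_ge2 le_k.
have le_21 := lam_nonincreasing lam_sorted (isT : 1 <= 1 <= 2) size_ge2.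
apply/mapP/eqP => [[q]|->]; last by exists 1; rewrite ?mem_iota; lia.
rewrite mem_iota => /andP[q_gt0 lt_q].
have [->|q_gt1] := eqVneq q 1; first lia.
have := @lam_nonincreasing _ 2 q lam_sorted; lia.
Qed.

Theorem lemma3 (n : nat) (lam : seq nat) :
  2 <= n -> size lam = n -> sorted geq lam ->
  A_lam lam =
  \sum_(1 <= j < n.+1)
     'C(lam_ lam 1 - lam_ lam 2 + j - 1, lam_ lam 1 - lam_ lam 2) * R_lam lam j.
Proof.
move=> n_ge2 size_lam lam_sorted; subst n.
have le_21 := lam_nonincreasing lam_sorted (isT : 1 <= 1 <= 2) n_ge2.
set m := lam_ lam 1 - lam_ lam 2; set c := size lam + lam_ lam 2 - 1.
have -> : A_lam lam = count_states (c + m.+1) (fun _ : 'I_(size lam) => true) (fun _ => false)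
    (fun k => top_up lam k.+1) (fun _ => false).
  by rewrite (_ : c + m.+1 = size lam + lam_ lam 1) //; lia.
rewrite count_states_split.
transitivity (\sum_(v : {ffun 'I_(size lam) -> bool})
    (\sum_(1 <= j < (size lam).+1 | v == left_at _ j) 'C(m + j - 1, m)) *
    count_states c v (fun _ => false) (fun k => top_up lam k.+1) (fun _ => false)).
  apply: eq_bigr => v _; rewrite -count_corner_block; congr (_ * _).
  by apply: eq_count_states => // k; rewrite inE ltnS => le_k; rewrite top_up_corner.
rewrite sum_left_at_mul; apply: eq_bigr => j _; congr (_ * _).
rewrite (_ : R_lam lam j = count_states c (fun i : 'I_(size lam) => i.+1 != j)
  (fun _ => false) (fun k => top_up lam k.+1) (fun _ => false)) //.
by apply: eq_count_states => // i; rewrite ffunE.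
Qed.
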